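(* Let $K\ge 1$ and $T\ge 2$ be integers and let $a_1,\dots,a_{T-1}$ be binary sequences of period $K$. Define the binary sequences $s=I(1_K,a_1,\dots,a_{T-1})$ and $s'=I(0_K,a_1,\dots,a_{T-1})$ of period $KT$. For $0\le \tau<KT$ write $\tau=\tau_1T+\tau_2$ with $0\le\tau_2\le T-1$. Then $$R_{s'}(\tau)=\begin{cases}R_s(\tau)&\text{if }\tau_2=0,\\ R_s(\tau)-2d(a_{\tau_2})-2d(a_{T-\tau_2})&\text{if }\tau_2\neq 0,\end{cases}$$ $$R_{s,s'}(\tau)=\begin{cases}TK-2K&\text{if }\tau=0,\\ R_s(\tau)-2K&\text{if }\tau_2=0,\ \tau\neq 0,\\ R_s(\tau)-2d(a_{T-\tau_2})&\text{otherwise},\end{cases}\qquad R_{s',s}(\tau)=\begin{cases}TK-2K&\text{if }\tau=0,\\ R_s(\tau)-2K&\text{if }\tau_2=0,\ \tau\neq 0,\\ R_s(\tau)-2d(a_{\tau_2})&\text{otherwise}.\end{cases}$$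
   Context: A binary sequence of period $n$ is a map $\mathbb{Z}\to\{0,1\}$ with period $n$ (indices are taken modulo $n$). For binary sequences $a,b$ of period $n$, the periodic correlation is $R_{a,b}(\tau)=\sum_{t=0}^{n-1}(-1)^{a(t)+b(t+\tau)}$ (with $t+\tau$ taken mod $n$), and $R_a(\tau)=R_{a,a}(\tau)$. For binary sequences $b_0,\dots,b_{T-1}$ of period $K$, the interleaved sequence $I(b_0,\dots,b_{T-1})$ is the binary sequence $v$ of period $KT$ defined by $v(iT+j)=b_j(i)$ for $0\le i\le K-1$, $0\le j\le T-1$. $0_K$ and $1_K$ denote the all-zero and all-one sequences of period $K$. For a binary sequence $a$ of period $K$, $d(a)=2|\{0\le t\le K-1: a(t)=1\}|-K$. *)

From mathcomp Require Import all_boot all_order all_algebra.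
Set Implicit Arguments. Unset Strict Implicit. Unset Printing Implicit Defensive.
Import GRing.Theory Num.Theory.
Local Open Scope ring_scope.

(* A binary sequence of period n is represented by a function nat -> bool;
   only its values at 0..n-1 matter (all indices are reduced mod n). *)
Definition binseq := nat -> bool.

Definition corr (n : nat) (a b : binseq) (tau : nat) : int :=
  \sum_(t < n) (-1) ^+ (a t + b ((t + tau) %% n))%N.

Definition acorr (n : nat) (a : binseq) (tau : nat) : int := corr n a a tau.

Definition interleave (K T : nat) (b : nat -> binseq) : binseq :=
  fun m => b (m %% T)%N ((m %/ T) %% K)%N.

Definition zeros : binseq := fun _ => false.
Definition ones : binseq := fun _ => true.

Definition dval (K : nat) (a : binseq) : int :=
  (2 * count a (iota 0 K))%:Z - K%:Z.

Definition cols (c0 : binseq) (a : nat -> binseq) : nat -> binseq :=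
  fun j => if j == 0%N then c0 else a j.

From mathcomp Require Import all_boot all_order all_algebra.
From mathcomp Require Import zify.
Set Implicit Arguments. Unset Strict Implicit. Unset Printing Implicit Defensive.
Import GRing.Theory Num.Theory.
Local Open Scope ring_scope.

(* In signs, (-1)^s'(t) = (-1)^s(t) + 2 [T | t], since s and s' differ only
   in column 0.  Expanding the correlations bilinearly, every extra term is a
   correlation with the indicator of the multiples of T, which reads off a
   single column of s, cyclically rotated; its sign sum is -d(a_j), or -K for
   the all-one column 0.  With the indicator in the first slot the column is
   tau mod T = tau_2; in the second slot it is -tau mod T, i.e. T - tau_2. *)

Definition sgn (b : bool) : int := (-1) ^+ b.

Definition dvd_ind (T t : nat) : int := (T %| t)%:R.

Definition xcorr (n : nat) (x y : nat -> int) (tau : nat) : int :=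
  \sum_(t < n) x t * y ((t + tau) %% n)%N.

Lemma corrE n a b tau :
  corr n a b tau = xcorr n (fun t => sgn (a t)) (fun t => sgn (b t)) tau.
Proof. by apply: eq_bigr => t _; rewrite exprD. Qed.

Lemma sgn_mulss b : sgn b * sgn b = 1.
Proof. by case: b. Qed.

Lemma acorr0 n a : acorr n a 0 = n%:Z.
Proof.
rewrite /acorr corrE /xcorr (eq_bigr (fun _ => 1)) ?sumr_const ?card_ord ?natz //.
by move=> t _; rewrite addn0 modn_small // sgn_mulss.
Qed.

Lemma xcorr_combl n c x x' y z tau : (forall t, x' t = x t + c * y t) ->
  xcorr n x' z tau = xcorr n x z tau + c * xcorr n y z tau.
Proof.
move=> Ex'; rewrite /xcorr mulr_sumr -big_split /=.
by apply: eq_bigr => t _; rewrite Ex' mulrDl mulrA.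
Qed.

Lemma xcorr_combr n c x y y' z tau : (forall t, y' t = y t + c * z t) ->
  xcorr n x y' tau = xcorr n x y tau + c * xcorr n x z tau.
Proof.
move=> Ey'; rewrite /xcorr mulr_sumr -big_split /=.
by apply: eq_bigr => t _; rewrite Ey' mulrDr mulrCA.
Qed.

Lemma sum_ord_rot n m (f : nat -> int) :
  \sum_(i < n) f ((i + m) %% n)%N = \sum_(i < n) f i.
Proof.
elim: m => [|m IH]; first by apply: eq_bigr => i _; rewrite addn0 modn_small.
case: n f IH => [|n] f IH; first by rewrite !big_ord0.
rewrite -IH big_ord_recr big_ord_recl /= addnS -addSn modnDl add0n addrC.
by congr (_ + _); apply: eq_bigr => i _; rewrite /bump leq0n add1n addnS addSn.
Qed.

Lemma xcorrC n x y tau : (tau <= n)%N ->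
  xcorr n x y tau = xcorr n y x (n - tau).
Proof.
move=> le_tau_n; rewrite /xcorr.
rewrite -(sum_ord_rot n tau (fun t => y t * x ((t + (n - tau)) %% n)%N)).
apply: eq_bigr => t _; rewrite mulrC modnDml -addnA subnKC // modnDr.
by rewrite (modn_small (ltn_ord t)).
Qed.

Lemma sum_ord_mul K T (F : nat -> int) :
  \sum_(t < (K * T)%N) F t = \sum_(i < K) \sum_(j < T) F (i * T + j)%N.
Proof.
rewrite -(big_mkord xpredT); elim: K => [|K IH]; first by rewrite big_geq ?big_ord0.
rewrite big_ord_recr /= -IH mulSn addnC.
rewrite (@big_cat_nat _ _ _ (K * T)%N 0 (K * T + T)%N) ?leq_addr //=.
congr (_ + _); rewrite -{1}(add0n (K * T)%N) big_addn addKn big_mkord.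
by apply: eq_bigr => j _; rewrite addnC.
Qed.

Section Interleaving.

Variables K T : nat.
Hypothesis T_gt0 : (0 < T)%N.

Lemma xcorr_dvd_indl y m :
  xcorr (K * T) (dvd_ind T) y m = \sum_(i < K) y ((i * T + m) %% (K * T))%N.
Proof.
rewrite /xcorr (sum_ord_mul K T (fun t => dvd_ind T t * y ((t + m) %% (K * T))%N)).
apply: eq_bigr => i _; rewrite (bigD1 (Ordinal T_gt0)) //= addn0.
rewrite {1}/dvd_ind dvdn_mull // mul1r big1 ?addr0 // => j; rewrite -val_eqE /= => j_neq0.
by rewrite /dvd_ind /dvdn modnMDl (modn_small (ltn_ord j)) (negbTE j_neq0) mul0r.
Qed.

Lemma xcorr_dvd_ind m :
  xcorr (K * T) (dvd_ind T) (dvd_ind T) m = dvd_ind T m *+ K.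
Proof.
rewrite xcorr_dvd_indl -[K in RHS]card_ord -sumr_const; apply: eq_bigr => i _.
by rewrite /dvd_ind /dvdn modn_dvdm ?dvdn_mull // modnMDl.
Qed.

Lemma interleave_shift (b : nat -> binseq) i m :
  interleave K T b ((i * T + m) %% (K * T))%N = b (m %% T)%N ((i + m %/ T) %% K)%N.
Proof.
rewrite /interleave modn_dvdm ?dvdn_mull // modnMDl; congr (b _ _).
by rewrite -modn_divl divnMDl // modn_mod.
Qed.

Lemma xcorr_dvd_ind_interleave (b : nat -> binseq) m :
  xcorr (K * T) (dvd_ind T) (fun t => sgn (interleave K T b t)) m =
  \sum_(i < K) sgn (b (m %% T)%N i).
Proof.
rewrite xcorr_dvd_indl -(sum_ord_rot K (m %/ T) (fun i => sgn (b _ i))).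
by apply: eq_bigr => i _; rewrite interleave_shift.
Qed.

End Interleaving.

Lemma sgn_interleave_zeros K T (a : nat -> binseq) t :
  sgn (interleave K T (cols zeros a) t) =
  sgn (interleave K T (cols ones a) t) + 2 * dvd_ind T t.
Proof.
rewrite /interleave /cols /dvd_ind /dvdn; case: eqP => _ /=; last by rewrite mulr0 addr0.
by rewrite /sgn expr0 expr1 mulr1.
Qed.

Lemma sum_sgn_dval K (b : binseq) : \sum_(i < K) sgn (b i) = - dval K b.
Proof.
rewrite /dval; elim: K => [|K IH]; first by rewrite big_ord0.
rewrite big_ord_recr IH (_ : iota 0 K.+1 = iota 0 K ++ [:: K]).
  by rewrite count_cat /= addn0; case: (b K); rewrite /sgn ?expr0 ?expr1; lia.
by rewrite -addn1 iotaD.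
Qed.

Lemma sum_sgn_cols K (a : nat -> binseq) j :
  \sum_(i < K) sgn (cols ones a j i) =
  if j == 0%N then - K%:Z else - dval K (a j).
Proof.
rewrite -sum_sgn_dval /cols; case: eqP => _ //.
by rewrite /ones sumr_const card_ord mulNrn natz.
Qed.

Theorem theorem2 (K T : nat) (hK : (1 <= K)%N) (hT : (2 <= T)%N)
  (a : nat -> binseq) (tau : nat) (htau : (tau < K * T)%N) :
  let s := interleave K T (cols ones a) in
  let s' := interleave K T (cols zeros a) in
  let tau2 := (tau %% T)%N in
  (acorr (K * T) s' tau =
     if tau2 == 0%N then acorr (K * T) s tau
     else acorr (K * T) s tau - 2 * dval K (a tau2) - 2 * dval K (a (T - tau2)%N))
  /\
  (corr (K * T) s s' tau =
     if tau == 0%N then (T * K)%:Z - (2 * K)%:Z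
     else if tau2 == 0%N then acorr (K * T) s tau - (2 * K)%:Z
     else acorr (K * T) s tau - 2 * dval K (a (T - tau2)%N))
  /\
  (corr (K * T) s' s tau =
     if tau == 0%N then (T * K)%:Z - (2 * K)%:Z
     else if tau2 == 0%N then acorr (K * T) s tau - (2 * K)%:Z
     else acorr (K * T) s tau - 2 * dval K (a tau2)).
Proof.
move=> s s' tau2.
have T_gt0 : (0 < T)%N by lia.
have tau2_lt : (tau2 < T)%N by rewrite ltn_mod.
have col_neg : ((K * T - tau) %% T = if tau2 == 0 then 0 else T - tau2)%N.
  rewrite (modnB T_gt0 (ltnW htau)) modnMl -/tau2.
  by case: posnP => [->|_]; rewrite ?subn0 //= mul1n addn0.
set x := fun t => sgn (s t).
have s'E : forall t, sgn (s' t) = x t + 2 * dvd_ind T t := sgn_interleave_zeros K T a.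
have A : xcorr (K * T) (dvd_ind T) x tau = \sum_(i < K) sgn (cols ones a tau2 i).
  exact: xcorr_dvd_ind_interleave.
have B : xcorr (K * T) x (dvd_ind T) tau =
         \sum_(i < K) sgn (cols ones a ((K * T - tau) %% T) i).
  by rewrite xcorrC ?xcorr_dvd_ind_interleave // ltnW.
have R0 : tau = 0%N -> xcorr (K * T) x x tau = (K * T)%:Z.
  by move=> ->; rewrite -(acorr0 _ s) /acorr corrE.
rewrite /acorr !corrE -/x !(xcorr_combl _ _ _ s'E) !(xcorr_combr _ _ _ s'E) A B.
rewrite xcorr_dvd_ind // /dvd_ind /dvdn -/tau2 col_neg !sum_sgn_cols [(T * K)%N]mulnC.
case: (tau2 =P 0%N) => [_ | tau2_neq0] /=.
  by case: (tau =P 0%N) => [/R0 -> | _]; lia.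
have -> : (tau == 0%N) = false.
  by apply/eqP => tau0; apply: tau2_neq0; rewrite /tau2 tau0 mod0n.
have -> : (T - tau2 == 0)%N = false by apply/eqP; lia.
lia.
Qed.
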